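(* As formal power series in $t$ (with coefficients polynomials in $x$), \[ \frac{(1-t)^3}{(1-t)^4-xt(t+1)^2}=1+\sum_{m=1}^{\infty}H_m^{(2)}(x)\,t^m . \]
   Context: For integers $m\ge0$, $n\ge1$, let $\theta_m=2\pi/(2m+1)$ and $H_m^{(n)}(x)=\prod_{k=1}^{m}\big(x+(2\cos k\theta_m+2)^n\big)$ (so $H_0^{(n)}=1$). *)

From Stdlib Require Import Reals.
Open Scope R_scope.

Definition theta (m : nat) : R := 2 * PI / (2 * INR m + 1).

Fixpoint Hprod (n m : nat) (x : R) (j : nat) : R :=
  match j with
  | O => 1
  | S j' => Hprod n m x j' * (x + (2 * cos (INR (S j') * theta m) + 2) ^ n)
  end.

Definition H (n m : nat) (x : R) : R := Hprod n m x m.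

Definition ps := nat -> R.
Definition ps_const (c : R) : ps := fun k => match k with O => c | _ => 0 end.
Definition ps_one : ps := ps_const 1.
Definition ps_t : ps := fun k => match k with 1%nat => 1 | _ => 0 end.
Definition ps_add (f g : ps) : ps := fun k => f k + g k.
Definition ps_sub (f g : ps) : ps := fun k => f k - g k.
Definition ps_mul (f g : ps) : ps :=
  fun k => sum_f_R0 (fun i => f i * g (k - i)%nat) k.
Fixpoint ps_pow (f : ps) (e : nat) : ps :=
  match e with O => ps_one | S e' => ps_mul f (ps_pow f e') end.

Definition Hseries (x : R) : ps :=
  fun m => match m with O => 1 | _ => H 2 m x end.

From Stdlib Require Import Reals Lra FunctionalExtensionality.
From mathcomp Require Import all_boot all_algebra.
From mathcomp Require Import Rstruct ring.
Set Implicit Arguments. Unset Strict Implicit. Unset Printing Implicit Defensive.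
Import GRing.Theory.
Local Open Scope ring_scope.

(* The numbers y_k = 2 cos (k theta_m), 1 <= k <= m, are the m roots of the monic polynomial
   W_m given by W_0 = 1, W_1 = y + 1, W_(m+2) = y W_(m+1) - W_m (a Chebyshev polynomial of
   the fourth kind), because W_m(2 cos f) sin (f/2) = sin ((2m+1) f/2).  If M is the matrix of
   multiplication by w - 2 on R[w]/(w^2 + x), then x + (y + 2)^2 = det (M - y), hence
   H_m^(2)(x) = prod_k det (M - y_k) = det W_m(M).  Writing W_m(M) = p_m + q_m w, the pair
   (p_m, q_m) satisfies a linear recurrence of order 2 and H_m^(2)(x) = p_m^2 + x q_m^2, so
   H_m^(2)(x) satisfies the order 4 recurrence read off the denominator; the numerator is
   fixed by the first four values. *)

Section ChebyshevW.
Variable T : nzRingType.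

Fixpoint chebW (y : T) (m : nat) : T :=
  match m with
  | 0 => 1
  | 1 => y + 1
  | (m'.+1 as m1).+1 => y * chebW y m1 - chebW y m'
  end.

Lemma chebWSS y m : chebW y m.+2 = y * chebW y m.+1 - chebW y m.
Proof. by []. Qed.

End ChebyshevW.

Lemma chebW_rmorph (T S : nzRingType) (f : {rmorphism T -> S}) y m :
  f (chebW y m) = chebW (f y) m.
Proof.
suff: f (chebW y m) = chebW (f y) m /\ f (chebW y m.+1) = chebW (f y) m.+1 by case.
elim: m => [|m [IH1 IH2]]; first by rewrite /= rmorphD !rmorph1.
by split=> //; rewrite !chebWSS rmorphB rmorphM IH1 IH2.
Qed.

Section ChebyshevWCos.
Local Open Scope R_scope.

Lemma chebW_cos (f : R) m :
  chebW (2 * cos f) m * sin (f / 2) = sin ((2 * INR m + 1) * (f / 2)).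
Proof.
have sin_sum a : 2 * cos f * sin a = sin (a + f) + sin (a - f).
  rewrite sin_plus sin_minus; lra.
suff: chebW (2 * cos f) m * sin (f / 2) = sin ((2 * INR m + 1) * (f / 2)) /\
      chebW (2 * cos f) m.+1 * sin (f / 2) = sin ((2 * INR m.+1 + 1) * (f / 2)) by case.
elim: m => [|m [IH1 IH2]].
  split; first by rewrite Rmult_1_l; congr sin; simpl; lra.
  rewrite /= -RplusE Rmult_plus_distr_r Rmult_1_l sin_sum.
  have -> : f / 2 - f = - (f / 2) by lra.
  have -> : (2 * 1 + 1) * (f / 2) = f / 2 + f by lra.
  rewrite sin_neg; lra.
split=> //.
rewrite chebWSS -RminusE -RmultE Rmult_minus_distr_r Rmult_assoc IH2 IH1 sin_sum !S_INR.
have -> : (2 * (INR m + 1) + 1) * (f / 2) - f = (2 * INR m + 1) * (f / 2) by lra.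
have -> : (2 * (INR m + 1 + 1) + 1) * (f / 2) = (2 * (INR m + 1) + 1) * (f / 2) + f by lra.
lra.
Qed.

Lemma theta_pos m : 0 < theta m.
Proof.
apply: Rdiv_lt_0_compat; first by have := PI_RGT_0; lra.
by have := pos_INR m; lra.
Qed.

Lemma theta_mul m : (2 * INR m + 1) * theta m = 2 * PI.
Proof.
rewrite /theta Rmult_div_assoc /Rdiv Rmult_inv_r_id_m //.
by have := pos_INR m; lra.
Qed.

Definition chebW_node m k : R := 2 * cos (INR k * theta m).

Lemma chebW_node_root m k : (0 < k <= m)%N -> chebW (chebW_node m k) m = 0.
Proof.
move=> /andP [/ltP/lt_0_INR k_pos /leP/le_INR k_le_m].
have := chebW_cos (INR k * theta m) m; rewrite -/(chebW_node m k).
have -> : (2 * INR m + 1) * (INR k * theta m / 2) = INR k * PI.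
  have -> : (2 * INR m + 1) * (INR k * theta m / 2)
            = INR k * ((2 * INR m + 1) * theta m) / 2 by lra.
  by rewrite theta_mul; lra.
rewrite (sin_eq_0_1 (INR k * PI)); last by exists (Z.of_nat k); rewrite -INR_IZR_INZ.
have sin_pos : 0 < sin (INR k * theta m / 2).
  have := theta_pos m; have := theta_mul m => ? ?.
  by apply: sin_gt_0; nra.
by move=> /Rmult_integral [|/Rgt_not_eq].
Qed.

Lemma chebW_node_lt m j k : (0 < j < k)%N -> (k <= m)%N ->
  chebW_node m k < chebW_node m j.
Proof.
move=> /andP [/ltP/lt_0_INR j_pos /ltP/lt_INR j_lt_k] /leP/le_INR k_le_m.
have := theta_pos m; have := theta_mul m => ? ?.
by apply: Rmult_lt_compat_l; [lra | apply: cos_decreasing_1; nra].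
Qed.

End ChebyshevWCos.

Section ChebyshevWPoly.
Variable T : nzRingType.
Local Notation W m := (chebW ('X : {poly T}) m).

Lemma chebWX_monic_size m : W m \is monic /\ size (W m) = m.+1.
Proof.
suff: (W m \is monic /\ size (W m) = m.+1) /\ (W m.+1 \is monic /\ size (W m.+1) = m.+2).
  by case.
elim: m => [|m [[_ size1] [mon2 size2]]].
  by rewrite /= monic1 size_poly1 -polyC1 monicXaddC size_XaddC.
split=> //.
have size_XW : size ('X * W m.+1) = m.+3.
  by rewrite -commr_polyX size_mulX -?size_poly_eq0 size2.
have size_lt : (size (- W m) < size ('X * W m.+1)%R)%N by rewrite size_polyN size1 size_XW.
rewrite chebWSS; split; last by rewrite size_polyDl.
by rewrite monicE lead_coefDl // -commr_polyX lead_coefMX -monicE.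
Qed.

End ChebyshevWPoly.

Lemma chebWX_prod m :
  chebW ('X : {poly R}) m = \prod_(1 <= k < m.+1) ('X - (chebW_node m k)%:P).
Proof.
have [/monicP lead1 sizeW] := chebWX_monic_size R m.
rewrite -(big_map (chebW_node m) xpredT (fun z => 'X - z%:P)) /index_iota subSS subn0.
rewrite [LHS](all_roots_prod_XsubC (rs := map (chebW_node m) (iota 1 m))) ?lead1 ?scale1r //.
- by rewrite size_map size_iota.
- apply/allP => z /mapP [k]; rewrite mem_iota add1n ltnS => k_range ->.
  by rewrite /root -horner_evalE chebW_rmorph /= horner_evalE hornerX chebW_node_root.
- rewrite uniq_rootsE map_inj_in_uniq ?iota_uniq //.
  move=> j k; rewrite !mem_iota !add1n !ltnS => /andP [j_gt0 j_le] /andP [k_gt0 k_le] node_eq.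
  apply: contra_eq node_eq; case: (ltngtP j k) => // [j_lt_k | k_lt_j] _.
  + by apply/eqP/Rgt_not_eq/chebW_node_lt => //; rewrite j_gt0.
  + by apply/eqP/Rlt_not_eq/chebW_node_lt => //; rewrite k_gt0.
Qed.

(* The matrix of multiplication by p + q w on R[w]/(w^2 + x) in the basis (1, w): these
   matrices form a commutative ring on which the determinant is the norm p^2 + x q^2. *)
Definition quadmx (x p q : R) : 'M[R]_2 :=
  \matrix_(i < 2, j < 2) (nth [::] [:: [:: p; - x * q]; [:: q; p]] i)`_j.
(* Without this, arguments of type R would be parsed in Stdlib's R_scope. *)
Arguments quadmx (x p q)%_ring_scope.

Section QuadMx.
Variable x : R.

Lemma det_quadmx p q : \det (quadmx x p q) = p ^+ 2 + x * q ^+ 2.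
Proof.
rewrite (expand_det_row _ 0) !big_ord_recl big_ord0 /cofactor !det_mx11 !mxE /=.
by rewrite expr0 expr1; ring.
Qed.

Lemma quadmxM p q p' q' : quadmx x p q * quadmx x p' q' = quadmx x (p * p' - x * q * q') (p * q' + q * p').
Proof.
apply/matrixP => i j; rewrite !mxE !big_ord_recl big_ord0 !mxE /=.
by case: i => [[|[|i]] ?] //; case: j => [[|[|j]] ?] //=; ring.
Qed.

Lemma quadmxB p q p' q' : quadmx x p q - quadmx x p' q' = quadmx x (p - p') (q - q').
Proof.
apply/matrixP => i j; rewrite !mxE /=.
by case: i => [[|[|i]] ?] //; case: j => [[|[|j]] ?] //=; ring.
Qed.

Lemma quadmxD p q p' q' : quadmx x p q + quadmx x p' q' = quadmx x (p + p') (q + q').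
Proof.
apply/matrixP => i j; rewrite !mxE /=.
by case: i => [[|[|i]] ?] //; case: j => [[|[|j]] ?] //=; ring.
Qed.

Lemma scalar_quadmx a : a%:M = quadmx x a 0.
Proof.
apply/matrixP => i j; rewrite !mxE /=.
by case: i => [[|[|i]] ?] //; case: j => [[|[|j]] ?] //=; ring.
Qed.

Lemma quadmx_inj p q p' q' : quadmx x p q = quadmx x p' q' -> p = p' /\ q = q'.
Proof. by move/matrixP=> E; have := E 1 0; have := E 0 0; rewrite !mxE. Qed.

End QuadMx.

Section ChebyshevWQuadMx.
Variable x : R.
Local Notation M := (quadmx x (-2) 1).

Definition pseq m := chebW M m 0 0.
Definition qseq m := chebW M m 1 0.

Lemma chebW_quadmx m : chebW M m = quadmx x (pseq m) (qseq m).
Proof.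
suff [p [q E]] : exists p q, chebW M m = quadmx x p q by rewrite /pseq /qseq E !mxE.
suff: (exists p q, chebW M m = quadmx x p q) /\ (exists p q, chebW M m.+1 = quadmx x p q) by case.
elim: m => [|m [[p0 [q0 IH0]] [p [q IH]]]].
  have one_quadmx : 1 = quadmx x 1 0 := scalar_quadmx x 1.
  split; first by exists 1, 0.
  by exists (-1), 1; rewrite /= one_quadmx quadmxD; congr quadmx; ring.
split; first by exists p, q.
exists (-2 * p - x * q - p0), (p - 2 * q - q0).
by rewrite chebWSS IH IH0 quadmxM quadmxB; congr quadmx; ring.
Qed.

Lemma pseqSS m : pseq m.+2 = -2 * pseq m.+1 - x * qseq m.+1 - pseq m.
Proof.
have := chebWSS M m; rewrite !chebW_quadmx quadmxM quadmxB => /quadmx_inj [-> _]; ring.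
Qed.

Lemma qseqSS m : qseq m.+2 = pseq m.+1 - 2 * qseq m.+1 - qseq m.
Proof.
have := chebWSS M m; rewrite !chebW_quadmx quadmxM quadmxB => /quadmx_inj [_ ->]; ring.
Qed.

Lemma det_quadmx_sub_scalar y : \det (M - y%:M) = x + (y + 2) ^+ 2.
Proof. by rewrite (scalar_quadmx x y) quadmxB det_quadmx; ring. Qed.

Lemma prod_node_chebW m :
  \prod_(1 <= k < m.+1) (M - (chebW_node m k)%:M) = chebW M m.
Proof.
rewrite -[in RHS](horner_mx_X M) -chebW_rmorph chebWX_prod rmorph_prod.
by apply: eq_bigr => k _; rewrite rmorphB /= horner_mx_X horner_mx_C.
Qed.

End ChebyshevWQuadMx.

Lemma Hprod_big n m x j :
  Hprod n m x j = \prod_(1 <= k < j.+1) (x + (chebW_node m k + 2) ^+ n).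
Proof. by elim: j => [|j IH]; rewrite ?big_nil // big_nat_recr //= IH RpowE. Qed.

Lemma H2_pseq_qseq x m : H 2 m x = pseq x m ^+ 2 + x * qseq x m ^+ 2.
Proof.
rewrite /H Hprod_big -det_quadmx -chebW_quadmx -prod_node_chebW.
rewrite (big_morph _ (@det_mulmx _ _) (det1 _ _)).
by apply: eq_bigr => k _; rewrite det_quadmx_sub_scalar.
Qed.

Lemma sum_f_R0_big (f : nat -> R) n : sum_f_R0 f n = \sum_(i < n.+1) f i.
Proof. by elim: n => [|n IH]; rewrite ?big_ord1 // big_ord_recr /= IH. Qed.

Lemma ps_mulE f g k : ps_mul f g k = \sum_(i < k.+1) f i * g (k - i)%N.
Proof. exact: sum_f_R0_big. Qed.

Lemma ps_mulC f g : ps_mul f g = ps_mul g f.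
Proof.
apply: functional_extensionality => k; rewrite !ps_mulE (reindex_inj rev_ord_inj) /=.
by apply: eq_bigr => i _; rewrite subKn ?leq_ord // mulrC.
Qed.

Definition ps_of_poly (p : {poly R}) : ps := fun k => p`_k.

Lemma ps_of_poly1 : ps_of_poly 1 = ps_one.
Proof. by apply: functional_extensionality => -[|k]; rewrite /ps_of_poly coef1. Qed.

Lemma ps_of_polyX : ps_of_poly 'X = ps_t.
Proof. by apply: functional_extensionality => -[|[|k]]; rewrite /ps_of_poly coefX. Qed.

Lemma ps_of_polyC c : ps_of_poly c%:P = ps_const c.
Proof. by apply: functional_extensionality => -[|k]; rewrite /ps_of_poly coefC. Qed.

Lemma ps_of_polyD p q : ps_of_poly (p + q) = ps_add (ps_of_poly p) (ps_of_poly q).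
Proof. by apply: functional_extensionality => k; rewrite /ps_of_poly coefD. Qed.

Lemma ps_of_polyB p q : ps_of_poly (p - q) = ps_sub (ps_of_poly p) (ps_of_poly q).
Proof. by apply: functional_extensionality => k; rewrite /ps_of_poly coefB. Qed.

Lemma ps_of_polyM p q : ps_of_poly (p * q) = ps_mul (ps_of_poly p) (ps_of_poly q).
Proof. by apply: functional_extensionality => k; rewrite ps_mulE /ps_of_poly coefM. Qed.

Lemma ps_of_poly_exp p e : ps_of_poly (p ^+ e) = ps_pow (ps_of_poly p) e.
Proof. by elim: e => [|e IH]; rewrite ?ps_of_poly1 // exprS ps_of_polyM IH. Qed.

Lemma ps_mul_Poly_cons0 a s g : ps_mul (ps_of_poly (Poly (a :: s))) g 0 = a * g 0%N.
Proof. by rewrite ps_mulE big_ord1 /ps_of_poly coef_Poly. Qed.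

Lemma ps_mul_Poly_consS a s g k :
  ps_mul (ps_of_poly (Poly (a :: s))) g k.+1 = a * g k.+1 + ps_mul (ps_of_poly (Poly s)) g k.
Proof.
rewrite !ps_mulE big_ord_recl /ps_of_poly coef_Poly subn0.
by congr (_ + _); apply: eq_bigr => i _; rewrite !coef_Poly /= subSS.
Qed.

Lemma ps_mul_Poly1 a g k : ps_mul (ps_of_poly (Poly [:: a])) g k = a * g k.
Proof.
rewrite ps_mulE big_ord_recl big1 ?addr0 => [|i _]; rewrite /ps_of_poly coef_Poly ?subn0 //.
by rewrite /= nth_nil mul0r.
Qed.

Lemma denominator_Poly x :
  ps_sub (ps_pow (ps_sub ps_one ps_t) 4)
         (ps_mul (ps_const x) (ps_mul ps_t (ps_pow (ps_add ps_t ps_one) 2)))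
  = ps_of_poly (Poly [:: 1; -(4 + x); 6 - 2 * x; -(4 + x); 1]).
Proof.
have -> : Poly [:: 1; -(4 + x); 6 - 2 * x; -(4 + x); 1]
          = (1 - 'X) ^+ 4 - x%:P * ('X * ('X + 1) ^+ 2).
  by rewrite /= !cons_poly_def; ring.
by rewrite ps_of_polyB ps_of_poly_exp 2!ps_of_polyM ps_of_poly_exp ps_of_polyB ps_of_polyD
  !ps_of_poly1 !ps_of_polyX ps_of_polyC.
Qed.

Lemma numerator_Poly : ps_pow (ps_sub ps_one ps_t) 3 = ps_of_poly (Poly [:: 1; -3; 3; -1]).
Proof.
have -> : Poly [:: 1; -3; 3; -1] = (1 - 'X) ^+ 3 :> {poly R} by rewrite /= !cons_poly_def; ring.
by rewrite ps_of_poly_exp ps_of_polyB ps_of_poly1 ps_of_polyX.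
Qed.

Section HSeries.
Variable x : R.

Lemma H2_rec n : H 2 n.+4 x =
  (4 + x) * H 2 n.+3 x - (6 - 2 * x) * H 2 n.+2 x + (4 + x) * H 2 n.+1 x - H 2 n x.
Proof. by rewrite !H2_pseq_qseq !(pseqSS, qseqSS); ring. Qed.

Lemma pseq_qseq_init : [/\ pseq x 0 = 1, qseq x 0 = 0, pseq x 1 = -1 & qseq x 1 = 1].
Proof. by rewrite /pseq /qseq /= !mxE /=; split=> //; ring. Qed.

Lemma H2_mul_denominator n :
  ps_mul (ps_of_poly (Poly [:: 1; -(4 + x); 6 - 2 * x; -(4 + x); 1])) (H 2 ^~ x) n
  = ps_of_poly (Poly [:: 1; -3; 3; -1]) n.
Proof.
have [p0 q0 p1 q1] := pseq_qseq_init.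
case: n => [|[|[|[|n]]]];
  rewrite ?ps_mul_Poly_consS ?ps_mul_Poly_cons0 ?ps_mul_Poly1 /ps_of_poly coef_Poly /=;
  last by rewrite nth_nil H2_rec; ring.
- by rewrite mul1r.
all: by rewrite !H2_pseq_qseq ?(pseqSS, qseqSS) p0 q0 p1 q1; ring.
Qed.

End HSeries.

Lemma Hseries_H x : Hseries x = H 2 ^~ x.
Proof. by apply: functional_extensionality => -[]. Qed.

Theorem proposition4p1 (x : R) (n : nat) :
  ps_mul (Hseries x)
    (ps_sub (ps_pow (ps_sub ps_one ps_t) 4)
            (ps_mul (ps_const x) (ps_mul ps_t (ps_pow (ps_add ps_t ps_one) 2)))) n
  = ps_pow (ps_sub ps_one ps_t) 3 n.
Proof.
rewrite denominator_Poly numerator_Poly Hseries_H ps_mulC.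
exact: H2_mul_denominator.
Qed.
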